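(* Let $G=(V,E)$ be a locally finite, connected, infinite graph, $x\in V$, and $p\in[0,1]$. For Bernoulli$(p)$ bond percolation on $G$, \[ \inf_{\Pi\in\mathscr{B}_E}\sum_{e\in\Pi}\mathbb{P}_p(A(x,e,\Pi))=\inf_S\varphi_p(x,S), \] where the infimum on the right is over all finite sets $S\subset V$ with $x\in S$.
   Context: Bernoulli$(p)$ bond percolation keeps each edge independently open with probability $p$; $\mathbb{P}_p$ is its law. For an edge set $\Pi\subset E$ and $e\in\Pi$, $A(x,e,\Pi)$ is the event that $e$ is open and $x$ is connected to $e$ by an open path that uses no edge of $\Pi\setminus\{e\}$. For $K\subset V$, the edge boundary is $\Delta K=\{(y,z)\in E:y\in K,z\notin K\}$, and $\mathscr{B}_E=\{\Delta S: S\text{ is the vertex set of a finite connected subgraph containing }x\}$. For a finite $S\subset V$ with $x\in S$, $\varphi_p(x,S)=p\sum_{y\in S}\sum_{z\notin S,\,(y,z)\in E}\mathbb{P}_p(x\stackrel{S}{\longleftrightarrow}y)$, where $\{x\stackrel{S}{\longleftrightarrow}y\}$ is the event that there is an open path from $x$ to $y$ using only vertices of $S$ (the inner sum counts edges $(y,z)$ with multiplicity). *)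

From HB Require Import structures.
From mathcomp Require Import all_boot all_order all_algebra.
From mathcomp Require Import all_classical all_reals all_analysis.
Set Implicit Arguments. Unset Strict Implicit. Unset Printing Implicit Defensive.
Import Order.TTheory GRing.Theory Num.Theory.
Local Open Scope classical_set_scope.
Local Open Scope ring_scope.

(* A (multi)graph: vertex type V, edge type E, each edge has two endpoints
   [ends e] (the order is irrelevant: the graph is undirected). *)
Section Graph.
Variables (V E : Type) (ends : E -> V * V).

Definition joins (e : E) (y z : V) : Prop :=
  ends e = (y, z) \/ ends e = (z, y).

Inductive walk (ok : E -> Prop) : V -> V -> Prop :=
| walk_nil u : walk ok u u
| walk_cons e u w v : ok e -> joins e u w -> walk ok w v -> walk ok u v.

Definition locally_finite : Prop :=
  forall v : V, finite_set [set e : E | exists w, joins e v w].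

Definition connected_graph : Prop :=
  forall u v : V, walk (fun _ => True) u v.

Definition infinite_graph : Prop := ~ finite_set [set: V].

Definition edge_boundary (K : set V) : set E :=
  [set e | exists y z, joins e y z /\ K y /\ ~ K z].

Definition finite_connected_containing (x : V) (S : set V) : Prop :=
  finite_set S /\ S x /\
  forall u v, S u -> S v ->
    walk (fun e => exists a b, joins e a b /\ S a /\ S b) u v.

Definition B_E (x : V) : set (set E) :=
  [set Pi | exists S, finite_connected_containing x S /\ Pi = edge_boundary S].

End Graph.

Section Events.
Variables (V E Omega : Type) (ends : E -> V * V) (open_ : E -> Omega -> bool).

Definition A_event (x : V) (e : E) (Pi : set E) : set Omega :=
  [set w | open_ e w /\
     exists a b, joins ends e a b /\
       walk ends (fun f => open_ f w /\ ~ (Pi f /\ f <> e)) x a].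

Definition conn_in (S : set V) (x y : V) : set Omega :=
  [set w | S x /\
     walk ends (fun f => open_ f w /\ exists a b, joins ends f a b /\ S a /\ S b) x y].
End Events.

Section Phi.
Variables (d : measure_display) (R : realType) (Omega : measurableType d)
  (P : probability Omega R) (V E : choiceType) (ends : E -> V * V)
  (open_ : E -> Omega -> bool).

Definition phi (p : R) (x : V) (S : set V) : \bar R :=
  (p%:E * \esum_(y in S)
     \esum_(e in [set e | exists z, joins ends e y z /\ ~ S z])
        P (conn_in ends open_ S x y))%E.

(* Bernoulli(p) bond percolation: the edge states are measurable,
   each open with probability p, and mutually independent. *)
Definition bernoulli_percolation (p : R) : Prop :=
  (forall e, measurable [set w | open_ e w]) /\
  (forall e, P [set w | open_ e w] = p%:E) /\
  (forall (s : seq E), uniq s ->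
     P [set w | forall e, e \in s -> open_ e w] = (p ^+ size s)%:E).
End Phi.

(* Let S be finite with x in S and let e = {y, z} be a boundary edge with y in S.
   An open path from x avoiding the other edges of the boundary of S cannot leave
   S before it first uses e, and it enters e at y; hence
   A(x, e, ΔS) = {e open} ∩ {x <-S-> y}.  The second event only depends on the
   edges inside S, so independence gives P(A(x, e, ΔS)) = p P(x <-S-> y), and
   summing over ΔS yields φ_p(x, S).  Replacing S by the component of x in S does
   not change φ_p(x, S), so both infima are taken over the same set of values. *)

From HB Require Import structures.
From mathcomp Require Import all_boot all_order all_algebra.
From mathcomp Require Import all_classical all_reals all_analysis.
From mathcomp Require Import ring.
Import Order.TTheory GRing.Theory Num.Theory.
Local Open Scope classical_set_scope.
Local Open Scope ring_scope.
Set Implicit Arguments. Unset Strict Implicit.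

Lemma perm_cons_cat3 (T : eqType) (x : T) s1 s2 s3 :
  perm_eq (x :: s1 ++ s2 ++ s3) (s1 ++ (x :: s2) ++ s3) /\
  perm_eq (x :: s1 ++ s2 ++ s3) (s1 ++ s2 ++ x :: s3).
Proof.
split; first by rewrite -cat1s perm_catCA.
by rewrite !catA -cat1s perm_catCA.
Qed.

Section Cylinders.
Variables (d : measure_display) (R : realType) (Omega : measurableType d)
  (P : probability Omega R) (E : choiceType) (open_ : E -> Omega -> bool) (p : R).
Hypothesis percolation : bernoulli_percolation P open_ p.

Let O (f : E) : set Omega := [set w | open_ f w].

Let measurable_open f : measurable (O f).
Proof. exact: percolation.1. Qed.

Definition cylinder (T U : seq E) : set Omega :=
  [set w | (forall f, f \in T -> open_ f w) /\ (forall f, f \in U -> ~~ open_ f w)].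

Lemma cylinder_nil : cylinder [::] [::] = setT.
Proof. by apply/seteqP; split=> // w _; split. Qed.

Lemma cylinder_consT f T U : cylinder (f :: T) U = O f `&` cylinder T U.
Proof.
apply/seteqP; split=> w.
  move=> [HT HU]; split; first by apply: HT; rewrite inE eqxx.
  by split=> // g gT; apply: HT; rewrite inE gT orbT.
by move=> [Of [HT HU]]; split=> // g; rewrite inE => /predU1P[->|/HT].
Qed.

Lemma cylinder_consU f T U : cylinder T (f :: U) = ~` O f `&` cylinder T U.
Proof.
apply/seteqP; split=> w.
  move=> [HT HU]; split; last by split=> // g gU; apply: HU; rewrite inE gU orbT.
  by apply/negP; apply: HU; rewrite inE eqxx.
by move=> [/negP Of [HT HU]]; split=> // g; rewrite inE => /predU1P[->|/HU].
Qed.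

Lemma measurable_cylinder T U : measurable (cylinder T U).
Proof.
elim: U => [|f U IHU].
  elim: T => [|f T IHT]; first by rewrite cylinder_nil.
  by rewrite cylinder_consT; apply: measurableI.
by rewrite cylinder_consU; apply: measurableI => //; apply: measurableC.
Qed.

Lemma probability_cylinder T U : uniq (T ++ U) ->
  P (cylinder T U) = (p ^+ size T * (1 - p) ^+ size U)%:E.
Proof.
elim: U T => [|f U IH] T.
  rewrite cats0 expr0 mulr1 => /percolation.2.2 <-; congr (P _).
  by apply/seteqP; split=> w /=; [case | split].
rewrite (uniq_catCA T [:: f] U) => ufTU.
have uTU : uniq (T ++ U) by case/andP: ufTU.
have -> : P (cylinder T (f :: U)) = (P (cylinder T U) - P (cylinder (f :: T) U))%E.
  rewrite cylinder_consU setIC -setDE measureD; first by rewrite setIC -cylinder_consT.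
  - exact: measurable_cylinder.
  - exact: measurable_open.
  - by change (P (cylinder T U) < +oo)%E; rewrite IH ?ltry.
rewrite !IH // -EFinB /= !exprS; congr (_%:E); ring.
Qed.

Definition determined_by (B : set Omega) (F : set E) :=
  forall w w', (forall f, F f -> open_ f w = open_ f w') -> B w -> B w'.

Lemma determined_by_sub B F F' : F `<=` F' -> determined_by B F -> determined_by B F'.
Proof. by move=> FF' BF w w' ww'; apply: BF => f /FF'; exact: ww'. Qed.

Lemma determined_by_perm B s s' : perm_eq s s' ->
  determined_by B [set` s] -> determined_by B [set` s'].
Proof. by move=> ss'; apply: determined_by_sub => f /=; rewrite (perm_mem ss'). Qed.

Lemma determined_by_cons B f fs T U : determined_by B [set` (f :: fs) ++ T ++ U] ->
  determined_by B [set` fs ++ (f :: T) ++ U] /\ determined_by B [set` fs ++ T ++ f :: U].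
Proof.
have [fT fU] := perm_cons_cat3 f fs T U.
by move=> BF; split; [exact: determined_by_perm fT BF | exact: determined_by_perm fU BF].
Qed.

Lemma determined_cylinder B T U : determined_by B [set` T ++ U] ->
  B `&` cylinder T U = cylinder T U \/ B `&` cylinder T U = set0.
Proof.
move=> BTU; have [[w0 [Bw0 Cw0]]|] := pselect (exists w, B w /\ cylinder T U w).
  left; apply/seteqP; split=> [w [] //| w Cw]; split=> //.
  apply: BTU Bw0 => f /=; rewrite mem_cat => /orP[fT|fU].
    by rewrite Cw0.1 ?Cw.1.
  by rewrite (negPf (Cw0.2 _ fU)) (negPf (Cw.2 _ fU)).
by move=> N; right; apply/seteqP; split=> // w [Bw Cw]; apply: N; exists w.
Qed.

Lemma measurable_determined B fs T U : determined_by B [set` fs ++ T ++ U] ->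
  measurable (B `&` cylinder T U).
Proof.
elim: fs T U => [|f fs IH] T U BF.
  by case: (determined_cylinder (T := T) (U := U) BF) => ->; [exact: measurable_cylinder|].
have -> : B `&` cylinder T U = B `&` cylinder (f :: T) U `|` B `&` cylinder T (f :: U).
  by rewrite -setIUr cylinder_consT cylinder_consU -setIUl setUv setTI.
have [BT BU] := determined_by_cons BF.
by apply: measurableU; [exact: IH BT | exact: IH BU].
Qed.

Lemma measure_split_open f A : measurable A ->
  P A = (P (A `\` O f) + P (A `&` O f))%E.
Proof. by move=> mA; exact: (measureDI P mA (measurable_open f)). Qed.

(* Condition on the edges of fs one at a time: once the cylinder fixes every edge
   that B depends on, B either contains it or misses it. *)
Lemma measure_open_determined_cylinder e B fs T U :
  uniq (e :: fs ++ T ++ U) -> determined_by B [set` fs ++ T ++ U] ->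
  P (O e `&` (B `&` cylinder T U)) = (p%:E * P (B `&` cylinder T U))%E.
Proof.
elim: fs T U => [|f fs IH] T U uTU BF.
  case: (determined_cylinder (T := T) (U := U) BF) => ->; last first.
    by rewrite setI0 measure0 mule0.
  have uTU' : uniq (T ++ U) by case/andP: uTU.
  by rewrite -cylinder_consT !probability_cylinder // -EFinM /= exprS mulrA.
have [fT fU] := perm_cons_cat3 f fs T U.
have [BT BU] := determined_by_cons BF.
have uniq_e s : perm_eq (f :: fs ++ T ++ U) s -> uniq (e :: s).
  by move=> fs_s; rewrite -(perm_uniq (_ : perm_eq (e :: f :: fs ++ T ++ U) _)) // perm_cons.
set X := B `&` cylinder T U.
have mX : measurable X := measurable_determined BF.
have mOX : measurable (O e `&` X) by apply: measurableI.
have XO : X `&` O f = B `&` cylinder (f :: T) U.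
  by rewrite cylinder_consT setIAC setIA.
have XC : X `\` O f = B `&` cylinder T (f :: U).
  by rewrite cylinder_consU setDE setIAC setIA.
rewrite (measure_split_open f mX) (measure_split_open f mOX) -setIA XO setDE -setIA -setDE XC.
rewrite (IH _ _ (uniq_e _ fT) BT) (IH _ _ (uniq_e _ fU) BU).
by rewrite muleDr // ge0_adde_def ?inE ?measure_ge0.
Qed.

Lemma measure_open_determined e (F : set E) B :
  finite_set F -> ~ F e -> determined_by B F -> P (O e `&` B) = (p%:E * P B)%E.
Proof.
move=> finF Fe BF; pose fs : seq E := finmap.enum_fset (fset_set F).
have memF f : (f \in fs) = (f \in F) by rewrite /fs in_fset_set.
have := @measure_open_determined_cylinder e B fs [::] [::].
rewrite cylinder_nil !setIT; apply; rewrite /= ?cats0.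
  by rewrite memF finmap.fset_uniq andbT; apply/negP; rewrite inE.
by apply: determined_by_sub BF => f /=; rewrite memF inE.
Qed.

End Cylinders.

Section Graph.
Variables (V E : Type) (ends : E -> V * V).

Lemma joins_sym e a b : joins ends e a b -> joins ends e b a.
Proof. by case=> H; [right|left]. Qed.

Lemma joins_endpoints e a b c c' : joins ends e a b -> joins ends e c c' ->
  (c = a /\ c' = b) \/ (c = b /\ c' = a).
Proof.
by rewrite /joins => -[] -> [] [-> ->]; [left|right|right|left].
Qed.

Lemma walk_mono (ok ok' : E -> Prop) u v :
  ok `<=` ok' -> walk ends ok u v -> walk ends ok' u v.
Proof.
move=> okok'; elim=> [u0|e u0 w v0 oke j _ IH]; first exact: walk_nil.
exact: walk_cons (okok' _ oke) j IH.
Qed.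

Lemma walk_cat ok u v w :
  walk ends ok u v -> walk ends ok v w -> walk ends ok u w.
Proof. by elim=> // e u0 w0 v0 oke j _ IH /IH; exact: walk_cons oke j. Qed.

Lemma walk_rcons ok u v w e :
  walk ends ok u v -> ok e -> joins ends e v w -> walk ends ok u w.
Proof.
by move=> uv oke j; apply: (walk_cat uv); apply: (walk_cons oke j); exact: walk_nil.
Qed.

Lemma walk_rev ok u v : walk ends ok u v -> walk ends ok v u.
Proof.
elim=> [u0|e u0 w v0 oke j _ IH]; first exact: walk_nil.
exact: walk_rcons IH oke (joins_sym j).
Qed.

Lemma walk_to_edge_avoiding ok e u a b : joins ends e a b -> walk ends ok u a ->
  exists c c', joins ends e c c' /\ walk ends (fun f => ok f /\ f <> e) u c.
Proof.
move=> + ua; elim: ua => [u0|f u0 w v0 okf jf _ IH] jab.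
  by exists u0, b; split=> //; exact: walk_nil.
have [fe|fe] := pselect (f = e).
  by exists u0, w; split; [rewrite -fe | exact: walk_nil].
have [c [c' [jc wc]]] := IH jab; exists c, c'; split=> //.
exact: walk_cons jf wc.
Qed.

Definition inner_edges (S : set V) : set E :=
  [set f | exists a b, joins ends f a b /\ S a /\ S b].

Lemma inner_edges_sub S S' : S `<=` S' -> inner_edges S `<=` inner_edges S'.
Proof. by move=> SS' f [a [b [j [Sa Sb]]]]; exists a, b; split=> //; split; exact: SS'. Qed.

Lemma inner_edges_endpoint S f u w : inner_edges S f -> joins ends f u w -> S w.
Proof. by move=> [a [b [jab [Sa Sb]]]] /(joins_endpoints jab) [[_ ->]|[_ ->]]. Qed.

Lemma boundary_endpoint S e y z c c' :
  joins ends e y z -> ~ S z -> joins ends e c c' -> S c -> c = y.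
Proof. by move=> jyz nSz /(joins_endpoints jyz) [[]|[-> _]]. Qed.

Lemma inner_edges_boundary S f : inner_edges S f -> ~ edge_boundary ends S f.
Proof.
move=> [a [b [jab [Sa Sb]]]] [y [z [jyz [Sy nSz]]]].
by have [[za _]|[zb _]] := joins_endpoints jab (joins_sym jyz); apply: nSz; rewrite ?za ?zb.
Qed.

Lemma walk_inside ok S u v : (forall f, ok f -> ~ edge_boundary ends S f) ->
  S u -> walk ends ok u v -> S v /\ walk ends (fun f => ok f /\ inner_edges S f) u v.
Proof.
move=> okS Su uv; elim: uv Su => [u0 Su|f u0 w v0 okf jf _ IH Su].
  by split=> //; exact: walk_nil.
have Sw : S w by apply: contrapT => nSw; apply: (okS f okf); exists u0, w.
have [Sv wv] := IH Sw; split=> //.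
by apply: (walk_cons _ jf wv); split=> //; exists u0, w.
Qed.

Lemma finite_inner_edges S :
  locally_finite ends -> finite_set S -> finite_set (inner_edges S).
Proof.
move=> lfin finS.
apply: (@sub_finite_set _ _ (\bigcup_(a in S) [set e | exists w, joins ends e a w])).
  by move=> f [a [b [j [Sa _]]]]; exists a => //; exists b.
by apply: bigcup_finite => // a _; exact: lfin.
Qed.

Variables (Omega : Type) (open_ : E -> Omega -> bool).

Lemma A_event_boundary S x e y z : S x -> joins ends e y z -> S y -> ~ S z ->
  A_event ends open_ x e (edge_boundary ends S) =
  [set w | open_ e w] `&` conn_in ends open_ S x y.
Proof.
move=> Sx jyz Sy nSz; apply/seteqP; split=> w.
- move=> [oe [a [b [jab xa]]]]; split=> //; split=> //.
  have [c [c' [jc xc]]] := walk_to_edge_avoiding jab xa.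
  have [|Sc xc_in] := walk_inside _ Sx xc; first by move=> f [[_ nb] fe] bf; exact: nb.
  rewrite -(boundary_endpoint jyz nSz jc Sc).
  by apply: walk_mono xc_in => f [[[opf _] _] inf].
- move=> [oe [_ xy]]; split=> //; exists y, z; split=> //.
  apply: walk_mono xy => f [opf inf]; split=> // -[bf _].
  exact: inner_edges_boundary inf bf.
Qed.

End Graph.

Lemma esumZl_finite (R : realType) (T : choiceType) (A : set T) (k : \bar R)
  (f : T -> \bar R) : finite_set A -> (0 <= k)%E -> (forall i, A i -> 0 <= f i)%E ->
  (k * \esum_(i in A) f i)%E = \esum_(i in A) (k * f i)%E.
Proof.
move=> finA k0 f0; rewrite !esum_fset //; last first.
- by move=> i; rewrite inE => /f0.
- by move=> i; rewrite inE => /f0; apply: mule_ge0.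
rewrite !fsbig_finite // !big_seq ge0_sume_distrr // => i.
by rewrite in_fset_set // inE => /f0.
Qed.


Section BoundarySum.
Variables (V E : choiceType) (ends : E -> V * V)
  (d : measure_display) (R : realType) (Omega : measurableType d)
  (P : probability Omega R) (open_ : E -> Omega -> bool) (p : R).
Hypothesis percolation : bernoulli_percolation P open_ p.
Hypothesis lfin : locally_finite ends.
Variables (S : set V) (x : V).
Hypotheses (finS : finite_set S) (Sx : S x).

Lemma measure_A_event_boundary e y z : joins ends e y z -> S y -> ~ S z ->
  P (A_event ends open_ x e (edge_boundary ends S)) =
  (p%:E * P (conn_in ends open_ S x y))%E.
Proof.
move=> jyz Sy nSz; rewrite (A_event_boundary _ Sx jyz Sy nSz).
apply: (measure_open_determined percolation (finite_inner_edges lfin finS)).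
  by move=> inner_e; apply: inner_edges_boundary inner_e _; exists y, z.
move=> w w' ww' [_ xy]; split=> //.
by apply: walk_mono xy => f [opf inf]; split=> //; rewrite -ww'.
Qed.

Lemma esum_A_event_boundary : 0 <= p ->
  \esum_(e in edge_boundary ends S) P (A_event ends open_ x e (edge_boundary ends S))
  = phi P ends open_ p x S.
Proof.
move=> p0; rewrite /phi.
transitivity (\esum_(y in S) \esum_(e in [set e | exists z, joins ends e y z /\ ~ S z])
   P (A_event ends open_ x e (edge_boundary ends S)))%E; last first.
  have p0E : (0 <= p%:E)%E by rewrite lee_fin.
  have fin_out y : finite_set [set e | exists z, joins ends e y z /\ ~ S z].
    by apply: sub_finite_set (lfin y) => e [z [j _]]; exists z.
  rewrite esumZl_finite //; last by move=> y _; apply: esum_ge0 => e _; exact: measure_ge0.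
  apply: eq_esum => y Sy; rewrite esumZl_finite //.
  by apply: eq_esum => e [z [jyz nSz]]; exact: measure_A_event_boundary jyz Sy nSz.
rewrite esum_esum; last by move=> *; exact: measure_ge0.
apply: reindex_esum; split.
- by move=> [y e] [Sy [z [jyz nSz]]] /=; exists y, z.
- move=> [y1 e] [y2 e']; rewrite !inE /= => -[Sy1 [z1 [j1 _]]] [_ [z2 [j2 nSz2]]] /= ee'.
  by subst e'; rewrite (boundary_endpoint j2 nSz2 j1 Sy1).
- by move=> e [y [z [j [Sy nSz]]]]; exists (y, e) => //; split=> //; exists z.
Qed.

End BoundarySum.

Section Component.
Variables (V E : choiceType) (ends : E -> V * V) (S : set V) (x : V).
Hypothesis Sx : S x.

Definition component : set V := [set v | S v /\ walk ends (inner_edges ends S) x v].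

Lemma component_sub : component `<=` S.
Proof. by move=> v []. Qed.

Lemma component_center : component x.
Proof. by split=> //; exact: walk_nil. Qed.

Lemma walk_inner_component (Q : E -> Prop) u v : component u ->
  walk ends (fun f => Q f /\ inner_edges ends S f) u v ->
  walk ends (fun f => Q f /\ inner_edges ends component f) u v.
Proof.
move=> + uv; elim: uv => [u0 _|f u0 w v0 [Qf inf] jf _ IH [Su xu]]; first exact: walk_nil.
have Cw : component w.
  by split; [exact: inner_edges_endpoint inf jf | exact: walk_rcons xu inf jf].
by apply: (walk_cons _ jf (IH Cw)); split=> //; exists u0, w.
Qed.

Lemma finite_connected_component : finite_set S ->
  finite_connected_containing ends x component.
Proof.
move=> finS; split; first exact: sub_finite_set component_sub finS.
split=> [|u v Cu Cv]; first exact: component_center.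
have uv : walk ends (fun f => True /\ inner_edges ends S f) u v.
  by apply: walk_mono (walk_cat (walk_rev Cu.2) Cv.2) => f.
by apply: walk_mono (walk_inner_component Cu uv) => f [].
Qed.

Lemma out_edges_component y : component y ->
  [set e | exists z, joins ends e y z /\ ~ S z] =
  [set e | exists z, joins ends e y z /\ ~ component z].
Proof.
move=> [Sy xy]; apply/seteqP; split=> e [z [j nz]]; exists z; split=> //.
  by move/component_sub.
move=> Sz; apply: nz; split=> //; apply: (walk_rcons xy _ j).
by exists y, z.
Qed.

Variables (Omega : Type) (open_ : E -> Omega -> bool).

Lemma conn_in_component y : conn_in ends open_ S x y = conn_in ends open_ component x y.
Proof.
apply/seteqP; split=> w [_ xy]; split=> //.
- exact: component_center.
- exact: walk_inner_component component_center xy.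
- apply: walk_mono xy => f [opf inf]; split=> //.
  exact: inner_edges_sub component_sub _ inf.
Qed.

Lemma conn_in_notin_component y : ~ component y -> conn_in ends open_ S x y = set0.
Proof.
move=> nCy; apply/seteqP; split=> // w [_ xy]; apply: nCy.
have xy_in : walk ends (inner_edges ends S) x y by apply: walk_mono xy => f [].
split=> //; apply: (walk_inside _ Sx xy_in).1 => f; exact: inner_edges_boundary.
Qed.

End Component.

Lemma phi_component (V E : choiceType) (ends : E -> V * V)
  (d : measure_display) (R : realType) (Omega : measurableType d)
  (P : probability Omega R) (open_ : E -> Omega -> bool) (p : R) S x :
  S x -> phi P ends open_ p x S = phi P ends open_ p x (component ends S x).
Proof.
move=> Sx; rewrite /phi; congr (_ * _)%E.
rewrite [LHS]esum_mkcond [RHS]esum_mkcond; apply: eq_esum => y _.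
have [Cy|nCy] := pselect (component ends S x y).
  have Sy := component_sub Cy.
  by rewrite !ifT ?inE // (out_edges_component Cy) (conn_in_component _ Sx).
rewrite [in RHS]ifF; last by apply/negP; rewrite inE.
case: ifP => // _; rewrite (conn_in_notin_component Sx open_ nCy).
by apply: esum1 => e _; exact: measure0.
Qed.

Unset Implicit Arguments. Set Strict Implicit.

Theorem proposition3p1
  (V E : choiceType) (ends : E -> V * V)
  (d : measure_display) (R : realType) (Omega : measurableType d)
  (P : probability Omega R) (open_ : E -> Omega -> bool)
  (x : V) (p : R) :
  locally_finite ends -> connected_graph ends -> infinite_graph V ->
  0 <= p <= 1 ->
  bernoulli_percolation P open_ p ->
  ereal_inf [set (\esum_(e in Pi) P (A_event ends open_ x e Pi))%E
            | Pi in B_E ends x]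
  = ereal_inf [set phi P ends open_ p x S
              | S in [set S : set V | finite_set S /\ S x]].
Proof.
move=> lfin _ _ /andP[p0 _] percolation; congr ereal_inf; apply/seteqP; split.
- move=> _ [_ [S [[finS [Sx _]] ->]] <-].
  by exists S => //; rewrite (esum_A_event_boundary percolation lfin finS Sx p0).
- move=> _ [S [finS Sx] <-].
  have fcC := finite_connected_component ends Sx finS.
  exists (edge_boundary ends (component ends S x)); first by exists (component ends S x); split.
  rewrite (esum_A_event_boundary percolation lfin fcC.1 fcC.2.1 p0).
  by apply/esym/phi_component.
Qed.
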